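(* Let $f\colon X\to Y$ be a morphism in a pre-Hilbert $*$-category. The following are equivalent: (i) $f$ is contractive; (ii) $f$ has a jointly epic codilation; (iii) $f$ has a codilation; (iv) $\begin{bmatrix}1 & f^*\\ f & 1\end{bmatrix}\geq 0$ as an endomorphism of $X\oplus Y$.
   Context: A $*$-category is a category with a choice of $f^*\colon Y\to X$ for each $f\colon X\to Y$ such that $1^*=1$, $(gf)^*=f^*g^*$, $(f^* )^*=f$; $f$ is an isometry if $f^*f=1$. A pre-Hilbert $*$-category is a $*$-category with (R1) a zero object, (R2) orthonormal biproducts of all pairs of objects (biproducts $(X,s_1,r_1,s_2,r_2)$ with $r_k=s_k^*$; matrices of morphisms between biproducts are taken with respect to these), (R3) an isometric kernel for every morphism, and (R4) every diagonal $\Delta\colon X\to X\oplus X$ a kernel of some morphism; such a category is additive. For a Hermitian endomorphism $a$ of $A$, $a\geq 0$ means $a=y^*y$ for some $y\colon A\to Y$, and $a\le b$ means $b-a\ge 0$. A morphism $f$ is contractive if $f^*f\leq 1$. A codilation of $f\colon X\to Y$ is a cospan $(T,t_1,t_2)$ with $t_1\colon X\to T$, $t_2\colon Y\to T$ isometries and $t_2^*t_1=f$; it is jointly epic if $ut_1=vt_1$ and $ut_2=vt_2$ imply $u=v$. *)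

Record StarCat := {
  Obj : Type;
  Hom : Obj -> Obj -> Type;
  idm : forall X : Obj, Hom X X;
  comp : forall X Y Z : Obj, Hom Y Z -> Hom X Y -> Hom X Z;
  comp_assoc : forall (W X Y Z : Obj) (h : Hom Y Z) (g : Hom X Y) (f : Hom W X),
      comp W Y Z h (comp W X Y g f) = comp W X Z (comp X Y Z h g) f;
  comp_id_l : forall (X Y : Obj) (f : Hom X Y), comp X Y Y (idm Y) f = f;
  comp_id_r : forall (X Y : Obj) (f : Hom X Y), comp X X Y f (idm X) = f;
  star : forall X Y : Obj, Hom X Y -> Hom Y X;
  star_id : forall X : Obj, star X X (idm X) = idm X;
  star_comp : forall (X Y Z : Obj) (g : Hom Y Z) (f : Hom X Y),
      star X Z (comp X Y Z g f) = comp Z Y X (star X Y f) (star Y Z g);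
  star_invol : forall (X Y : Obj) (f : Hom X Y), star Y X (star X Y f) = f
}.

Arguments Hom {_} _ _.
Arguments idm {_} _.
Arguments comp {_ _ _ _} _ _.
Arguments star {_ _ _} _.

(* Biproducts are given as chosen data (X (+) Y, s1, r1, s2, r2); matrices
   are taken with respect to these chosen orthonormal biproducts.        *)
Record PreHilbertCat := {
  PH_cat :> StarCat;
  zobj : Obj PH_cat;
  to_zero : forall X : Obj PH_cat, Hom X zobj;
  from_zero : forall X : Obj PH_cat, Hom zobj X;
  to_zero_uniq : forall (X : Obj PH_cat) (u : Hom X zobj), u = to_zero X;
  from_zero_uniq : forall (X : Obj PH_cat) (u : Hom zobj X), u = from_zero X;
  bp : Obj PH_cat -> Obj PH_cat -> Obj PH_cat;
  bp_s1 : forall X Y, Hom X (bp X Y);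
  bp_s2 : forall X Y, Hom Y (bp X Y);
  bp_r1 : forall X Y, Hom (bp X Y) X;
  bp_r2 : forall X Y, Hom (bp X Y) Y;
  bp_orth1 : forall X Y, bp_r1 X Y = star (bp_s1 X Y);
  bp_orth2 : forall X Y, bp_r2 X Y = star (bp_s2 X Y);
  bp_r1s1 : forall X Y, comp (bp_r1 X Y) (bp_s1 X Y) = idm X;
  bp_r2s2 : forall X Y, comp (bp_r2 X Y) (bp_s2 X Y) = idm Y;
  bp_r1s2 : forall X Y, comp (bp_r1 X Y) (bp_s2 X Y)
                        = comp (from_zero X) (to_zero Y);
  bp_r2s1 : forall X Y, comp (bp_r2 X Y) (bp_s1 X Y)
                        = comp (from_zero Y) (to_zero X);
  bp_pair : forall W X Y, Hom W X -> Hom W Y -> Hom W (bp X Y);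
  bp_pair_r1 : forall W X Y (f : Hom W X) (g : Hom W Y),
      comp (bp_r1 X Y) (bp_pair W X Y f g) = f;
  bp_pair_r2 : forall W X Y (f : Hom W X) (g : Hom W Y),
      comp (bp_r2 X Y) (bp_pair W X Y f g) = g;
  bp_pair_uniq : forall W X Y (f : Hom W X) (g : Hom W Y) (h : Hom W (bp X Y)),
      comp (bp_r1 X Y) h = f -> comp (bp_r2 X Y) h = g -> h = bp_pair W X Y f g;
  bp_coprod : forall W X Y (f : Hom X W) (g : Hom Y W),
      exists h : Hom (bp X Y) W,
        comp h (bp_s1 X Y) = f /\ comp h (bp_s2 X Y) = g /\
        forall h' : Hom (bp X Y) W,
          comp h' (bp_s1 X Y) = f -> comp h' (bp_s2 X Y) = g -> h' = h;
  ker_exists : forall (X Y : Obj PH_cat) (f : Hom X Y),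
      exists (K : Obj PH_cat) (k : Hom K X),
        comp (star k) k = idm K /\
        comp f k = comp (from_zero Y) (to_zero K) /\
        forall (W : Obj PH_cat) (h : Hom W X),
          comp f h = comp (from_zero Y) (to_zero W) ->
          exists u : Hom W K, comp k u = h /\
            forall u' : Hom W K, comp k u' = h -> u' = u;
  (* (R4) every diagonal is a kernel of some morphism *)
  diag_kernel : forall X : Obj PH_cat,
      exists (Z : Obj PH_cat) (g : Hom (bp X X) Z),
        comp g (bp_pair X X X (idm X) (idm X))
          = comp (from_zero Z) (to_zero X) /\
        forall (W : Obj PH_cat) (h : Hom W (bp X X)),
          comp g h = comp (from_zero Z) (to_zero W) ->
          exists u : Hom W X, comp (bp_pair X X X (idm X) (idm X)) u = h /\
            forall u' : Hom W X, comp (bp_pair X X X (idm X) (idm X)) u' = h -> u' = u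
}.

Arguments bp {_} _ _.
Arguments bp_s1 {_} _ _.
Arguments bp_s2 {_} _ _.
Arguments bp_r1 {_} _ _.
Arguments bp_r2 {_} _ _.
Arguments bp_pair {_ _ _ _} _ _.

Section Ops.
Variable C : PreHilbertCat.

Definition diag (X : Obj C) : Hom X (bp X X) := bp_pair (idm X) (idm X).

Definition addm {X Y : Obj C} (f g : Hom X Y) : Hom X Y :=
  comp (star (diag Y)) (bp_pair f g).

Definition isometry {X Y : Obj C} (f : Hom X Y) : Prop :=
  comp (star f) f = idm X.

Definition positive {A : Obj C} (a : Hom A A) : Prop :=
  exists (Y : Obj C) (y : Hom A Y), a = comp (star y) y.

(* a <= b : b - a >= 0, i.e. the (unique, by additivity) c with a + c = b
   is positive *)
Definition le_herm {A : Obj C} (a b : Hom A A) : Prop :=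
  exists c : Hom A A, addm a c = b /\ positive c.

Definition contractive {X Y : Obj C} (f : Hom X Y) : Prop :=
  le_herm (comp (star f) f) (idm X).

Definition is_codilation {X Y T : Obj C} (f : Hom X Y)
    (t1 : Hom X T) (t2 : Hom Y T) : Prop :=
  isometry t1 /\ isometry t2 /\ comp (star t2) t1 = f.

Definition jointly_epic {X Y T : Obj C} (t1 : Hom X T) (t2 : Hom Y T) : Prop :=
  forall (W : Obj C) (u v : Hom T W),
    comp u t1 = comp v t1 -> comp u t2 = comp v t2 -> u = v.

Definition mx2 {X Y : Obj C} (a : Hom X X) (b : Hom Y X) (c : Hom X Y)
    (d : Hom Y Y) : Hom (bp X Y) (bp X Y) :=
  addm (addm (addm (comp (bp_s1 X Y) (comp a (bp_r1 X Y)))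
                   (comp (bp_s1 X Y) (comp b (bp_r2 X Y))))
             (comp (bp_s2 X Y) (comp c (bp_r1 X Y))))
       (comp (bp_s2 X Y) (comp d (bp_r2 X Y))).

End Ops.

Arguments diag {C} X.
Arguments addm {C X Y} f g.
Arguments isometry {C X Y} f.
Arguments positive {C A} a.
Arguments le_herm {C A} a b.
Arguments contractive {C X Y} f.
Arguments is_codilation {C X Y T} f t1 t2.
Arguments jointly_epic {C X Y T} t1 t2.
Arguments mx2 {C X Y} a b c d.


(* If f^* f + y^* y = 1, the column [f; y] and the first injection form a
   codilation of f.  Conversely, let (t1, t2) be a codilation and k an
   isometric kernel of t2^*.  The copairing [t2 k] is an isometry whose adjoint
   has zero kernel; by (R4) such a morphism is epic, hence unitary, so
   t2 t2^* + k k^* = 1 and 1 = t1^* t1 = f^* f + (k^* t1)^* (k^* t1).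
   Any codilation becomes jointly epic after corestricting [t1 t2] to its
   isometric image, and the Gram matrix of [t1 t2] is [[1, f^*], [f, 1]]. *)

Set Implicit Arguments.
Unset Strict Implicit.

Declare Scope hom_scope.

Section PreHilbert.

Variable C : PreHilbertCat.
Implicit Types A B D E K M T V W X Y Z : Obj C.

Definition zero_hom A B : Hom A B := comp (from_zero C B) (to_zero C A).

Local Infix "∘" := comp (at level 40, left associativity).
Local Notation "f ^*" := (star f) (at level 2, left associativity, format "f ^*").
Local Notation "0" := (zero_hom _ _) : hom_scope.
Local Notation "1" := (idm _) : hom_scope.
Local Infix "+" := addm : hom_scope.
Local Notation "<< a , b >>" := (bp_pair a b) : hom_scope.
Local Notation s1 := (@bp_s1 C).
Local Notation s2 := (@bp_s2 C).
Local Notation r1 := (@bp_r1 C).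
Local Notation r2 := (@bp_r2 C).
Local Open Scope hom_scope.

Definition epic {A B} (h : Hom A B) : Prop :=
  forall W (u v : Hom B W), u ∘ h = v ∘ h -> u = v.

Definition zero_kernel {A B} (g : Hom A B) : Prop :=
  forall W (w : Hom W A), g ∘ w = 0 -> w = 0.

Lemma compr0 A B D (h : Hom B D) : h ∘ (0 : Hom A B) = 0.
Proof.
  unfold zero_hom. rewrite comp_assoc, (from_zero_uniq C _ (h ∘ _)). reflexivity.
Qed.

Lemma comp0r A B D (h : Hom A B) : (0 : Hom B D) ∘ h = 0.
Proof.
  unfold zero_hom. rewrite <- comp_assoc, (to_zero_uniq C _ (_ ∘ h)). reflexivity.
Qed.

Lemma star0 A B : (0 : Hom A B)^* = 0.
Proof.
  unfold zero_hom. rewrite star_comp, (to_zero_uniq C _ (from_zero C B)^*),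
    (from_zero_uniq C _ (to_zero C A)^*).
  reflexivity.
Qed.

Lemma star_eq0 A B (h : Hom A B) : h^* = 0 -> h = 0.
Proof. intros E. rewrite <- (star_invol _ _ _ h), E, star0. reflexivity. Qed.

Lemma adjoint_eq0 A B D (g : Hom A B) (h : Hom B D) : h ∘ g = 0 -> g^* ∘ h^* = 0.
Proof. intros E. rewrite <- star_comp, E, star0. reflexivity. Qed.

Lemma star_comp_comp A B D E (z : Hom A B) (p : Hom D A) (q : Hom E A) :
  (z ∘ p)^* ∘ (z ∘ q) = p^* ∘ (z^* ∘ z ∘ q).
Proof. rewrite star_comp, <- !comp_assoc. reflexivity. Qed.

Lemma isometry_cancel A B D E (m : Hom A B) (p : Hom D A) (q : Hom E A) :
  isometry m -> (m ∘ p)^* ∘ (m ∘ q) = p^* ∘ q.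
Proof. intros Im. rewrite star_comp_comp, Im, comp_id_l. reflexivity. Qed.

Lemma r1_s2 X Y : r1 X Y ∘ s2 X Y = 0.
Proof. exact (bp_r1s2 C X Y). Qed.

Lemma r2_s1 X Y : r2 X Y ∘ s1 X Y = 0.
Proof. exact (bp_r2s1 C X Y). Qed.

Lemma star_s1 X Y : (s1 X Y)^* = r1 X Y.
Proof. symmetry; apply bp_orth1. Qed.

Lemma star_s2 X Y : (s2 X Y)^* = r2 X Y.
Proof. symmetry; apply bp_orth2. Qed.

Lemma star_r1 X Y : (r1 X Y)^* = s1 X Y.
Proof. rewrite bp_orth1, star_invol. reflexivity. Qed.

Lemma star_r2 X Y : (r2 X Y)^* = s2 X Y.
Proof. rewrite bp_orth2, star_invol. reflexivity. Qed.

Lemma comp_r1s1 X Y W (h : Hom W X) : r1 X Y ∘ (s1 X Y ∘ h) = h.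
Proof. rewrite comp_assoc, bp_r1s1, comp_id_l. reflexivity. Qed.

Lemma comp_r2s2 X Y W (h : Hom W Y) : r2 X Y ∘ (s2 X Y ∘ h) = h.
Proof. rewrite comp_assoc, bp_r2s2, comp_id_l. reflexivity. Qed.

Lemma comp_r1s2 X Y W (h : Hom W Y) : r1 X Y ∘ (s2 X Y ∘ h) = 0.
Proof. rewrite comp_assoc, r1_s2, comp0r. reflexivity. Qed.

Lemma comp_r2s1 X Y W (h : Hom W X) : r2 X Y ∘ (s1 X Y ∘ h) = 0.
Proof. rewrite comp_assoc, r2_s1, comp0r. reflexivity. Qed.

Lemma bp_hom_ext W X Y (h h' : Hom W (bp X Y)) :
  r1 X Y ∘ h = r1 X Y ∘ h' -> r2 X Y ∘ h = r2 X Y ∘ h' -> h = h'.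
Proof.
  intros E1 E2. rewrite (bp_pair_uniq C W X Y _ _ h eq_refl eq_refl).
  symmetry; apply bp_pair_uniq; symmetry; assumption.
Qed.

Lemma bp_copair_ext W X Y (h h' : Hom (bp X Y) W) :
  h ∘ s1 X Y = h' ∘ s1 X Y -> h ∘ s2 X Y = h' ∘ s2 X Y -> h = h'.
Proof.
  intros E1 E2.
  destruct (bp_coprod C W X Y (h ∘ s1 X Y) (h ∘ s2 X Y)) as (k & _ & _ & Hk).
  rewrite (Hk h eq_refl eq_refl). symmetry; apply Hk; symmetry; assumption.
Qed.

Lemma pair_comp V W X Y (a : Hom W X) (b : Hom W Y) (v : Hom V W) :
  <<a, b>> ∘ v = <<a ∘ v, b ∘ v>>.
Proof.
  apply bp_pair_uniq; rewrite comp_assoc;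
    [rewrite bp_pair_r1 | rewrite bp_pair_r2]; reflexivity.
Qed.

Lemma pair_h0 W X Y (h : Hom W X) : <<h, 0>> = s1 X Y ∘ h.
Proof. symmetry; apply bp_pair_uniq; [apply comp_r1s1 | apply comp_r2s1]. Qed.

Lemma pair_0h W X Y (h : Hom W Y) : <<0, h>> = s2 X Y ∘ h.
Proof. symmetry; apply bp_pair_uniq; [apply comp_r1s2 | apply comp_r2s2]. Qed.

Lemma pair_diag W X (a : Hom W X) : <<a, a>> = diag X ∘ a.
Proof. unfold diag. rewrite pair_comp, !comp_id_l. reflexivity. Qed.

Lemma codiag_s1 X : (diag X)^* ∘ s1 X X = 1.
Proof.
  rewrite <- star_r1, <- star_comp. unfold diag. rewrite bp_pair_r1, star_id.
  reflexivity.
Qed.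

Lemma codiag_s2 X : (diag X)^* ∘ s2 X X = 1.
Proof.
  rewrite <- star_r2, <- star_comp. unfold diag. rewrite bp_pair_r2, star_id.
  reflexivity.
Qed.

Lemma addm0 X Y (h : Hom X Y) : h + 0 = h.
Proof. unfold addm. rewrite pair_h0, comp_assoc, codiag_s1, comp_id_l. reflexivity. Qed.

Lemma add0m X Y (h : Hom X Y) : 0 + h = h.
Proof. unfold addm. rewrite pair_0h, comp_assoc, codiag_s2, comp_id_l. reflexivity. Qed.

Lemma compDl V X Y (a b : Hom X Y) (v : Hom V X) : (a + b) ∘ v = a ∘ v + b ∘ v.
Proof. unfold addm. rewrite <- comp_assoc, pair_comp. reflexivity. Qed.

Ltac bp_simpl :=
  repeat progress rewrite <- ?comp_assoc, ?comp_r1s1, ?comp_r2s2, ?comp_r1s2,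
    ?comp_r2s1, ?bp_r1s1, ?bp_r2s2, ?r1_s2, ?r2_s1, ?comp_id_l, ?comp_id_r,
    ?compr0, ?comp0r, ?addm0, ?add0m.

Lemma comp_codiag Y Z (u : Hom Y Z) :
  u ∘ (diag Y)^* = (diag Z)^* ∘ <<u ∘ r1 Y Y, u ∘ r2 Y Y>>.
Proof.
  apply bp_copair_ext; rewrite <- !comp_assoc, pair_comp; bp_simpl.
  - rewrite codiag_s1, comp_id_r, pair_h0, comp_assoc, codiag_s1, comp_id_l.
    reflexivity.
  - rewrite codiag_s2, comp_id_r, pair_0h, comp_assoc, codiag_s2, comp_id_l.
    reflexivity.
Qed.

Lemma compDr X Y Z (a b : Hom X Y) (u : Hom Y Z) : u ∘ (a + b) = u ∘ a + u ∘ b.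
Proof.
  unfold addm. rewrite comp_assoc, comp_codiag, <- comp_assoc, pair_comp.
  bp_simpl. rewrite !bp_pair_r1, !bp_pair_r2. reflexivity.
Qed.

Lemma bp_id_decomp X Y : 1 = s1 X Y ∘ r1 X Y + s2 X Y ∘ r2 X Y.
Proof. apply bp_copair_ext; rewrite compDl; bp_simpl; reflexivity. Qed.

Lemma gram_pair W X Y (a c : Hom W X) (b d : Hom W Y) :
  <<a, b>>^* ∘ <<c, d>> = a^* ∘ c + b^* ∘ d.
Proof.
  rewrite <- (comp_id_l _ _ _ <<c, d>>), bp_id_decomp, compDl, compDr,
    <- !comp_assoc, !(comp_assoc _ _ _ _ _ _ (s1 X Y)),
    !(comp_assoc _ _ _ _ _ _ (s2 X Y)), <- star_r1, <- star_r2, <- !star_comp,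
    !bp_pair_r1, !bp_pair_r2.
  reflexivity.
Qed.

Lemma copair_outer X Y T (U : Hom (bp X Y) T) :
  U ∘ U^* = (U ∘ s1 X Y) ∘ (U ∘ s1 X Y)^* + (U ∘ s2 X Y) ∘ (U ∘ s2 X Y)^*.
Proof.
  transitivity (U ∘ (s1 X Y ∘ r1 X Y + s2 X Y ∘ r2 X Y) ∘ U^*).
  - rewrite <- bp_id_decomp, comp_id_r. reflexivity.
  - rewrite compDr, compDl, !star_comp, star_s1, star_s2, <- !comp_assoc.
    reflexivity.
Qed.

Section Entries.

Variables (X Y : Obj C) (a : Hom X X) (b : Hom Y X) (c : Hom X Y) (d : Hom Y Y).

Lemma mx2_11 : r1 X Y ∘ (mx2 a b c d ∘ s1 X Y) = a.
Proof. unfold mx2. rewrite !compDl, !compDr. bp_simpl. reflexivity. Qed.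

Lemma mx2_12 : r1 X Y ∘ (mx2 a b c d ∘ s2 X Y) = b.
Proof. unfold mx2. rewrite !compDl, !compDr. bp_simpl. reflexivity. Qed.

Lemma mx2_21 : r2 X Y ∘ (mx2 a b c d ∘ s1 X Y) = c.
Proof. unfold mx2. rewrite !compDl, !compDr. bp_simpl. reflexivity. Qed.

Lemma mx2_22 : r2 X Y ∘ (mx2 a b c d ∘ s2 X Y) = d.
Proof. unfold mx2. rewrite !compDl, !compDr. bp_simpl. reflexivity. Qed.

End Entries.

Lemma mx2_ext X Y (h h' : Hom (bp X Y) (bp X Y)) :
  r1 X Y ∘ (h ∘ s1 X Y) = r1 X Y ∘ (h' ∘ s1 X Y) ->
  r1 X Y ∘ (h ∘ s2 X Y) = r1 X Y ∘ (h' ∘ s2 X Y) ->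
  r2 X Y ∘ (h ∘ s1 X Y) = r2 X Y ∘ (h' ∘ s1 X Y) ->
  r2 X Y ∘ (h ∘ s2 X Y) = r2 X Y ∘ (h' ∘ s2 X Y) -> h = h'.
Proof. intros; apply bp_copair_ext; apply bp_hom_ext; assumption. Qed.

Lemma mx2_id X Y : mx2 1 0 0 1 = idm (bp X Y).
Proof.
  apply mx2_ext; rewrite ?mx2_11, ?mx2_12, ?mx2_21, ?mx2_22; bp_simpl; reflexivity.
Qed.

Lemma gram_copair X Y T (U : Hom (bp X Y) T) :
  U^* ∘ U = mx2 ((U ∘ s1 X Y)^* ∘ (U ∘ s1 X Y)) ((U ∘ s1 X Y)^* ∘ (U ∘ s2 X Y))
                ((U ∘ s2 X Y)^* ∘ (U ∘ s1 X Y)) ((U ∘ s2 X Y)^* ∘ (U ∘ s2 X Y)).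
Proof.
  apply mx2_ext; rewrite ?mx2_11, ?mx2_12, ?mx2_21, ?mx2_22, star_comp_comp,
    ?star_s1, ?star_s2, <- !comp_assoc; reflexivity.
Qed.

(* The diagonal is the kernel of some g (R4); u and v agree on the image of h
   iff g <<u, v>> h = 0, and the adjoint of h kills (g <<u, v>>)^*. *)
Lemma epic_of_zero_kernel_star A B (h : Hom A B) : zero_kernel h^* -> epic h.
Proof.
  intros Hh W u v E.
  destruct (diag_kernel C W) as (Z & g & Hg & Hfac).
  change (g ∘ diag W = 0) in Hg.
  assert (Huv : g ∘ <<u, v>> = 0).
  { apply star_eq0, Hh. rewrite <- star_comp, <- comp_assoc, pair_comp, E,
      pair_diag, comp_assoc, Hg, comp0r, star0.
    reflexivity. }
  destruct (Hfac B <<u, v>> Huv) as (x & Hx & _).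
  change (diag W ∘ x = <<u, v>>) in Hx.
  transitivity x;
    [rewrite <- (bp_pair_r1 C _ _ _ u v) | rewrite <- (bp_pair_r2 C _ _ _ u v)];
    rewrite <- Hx; unfold diag;
    rewrite comp_assoc, ?bp_pair_r1, ?bp_pair_r2, comp_id_l; reflexivity.
Qed.

Lemma isometry_epic_coisometry A T (U : Hom A T) : isometry U -> epic U -> U ∘ U^* = 1.
Proof.
  intros IU EU. apply EU. rewrite <- comp_assoc, IU, comp_id_r, comp_id_l.
  reflexivity.
Qed.

Lemma isometric_kernel A B (g : Hom A B) :
  exists K (k : Hom K A), isometry k /\ g ∘ k = 0 /\
    forall W (h : Hom W A), g ∘ h = 0 -> k ∘ (k^* ∘ h) = h.
Proof.
  destruct (ker_exists C A B g) as (K & k & Ik & Hk & Hfac).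
  exists K, k. split; [exact Ik | split; [exact Hk |]].
  intros W h Hh. destruct (Hfac W h Hh) as (u & <- & _).
  rewrite (comp_assoc _ _ _ _ _ k^*), Ik, comp_id_l. reflexivity.
Qed.

Lemma isometry_complement Y T (t : Hom Y T) :
  isometry t -> exists K (k : Hom K T), t ∘ t^* + k ∘ k^* = 1.
Proof.
  intros It.
  destruct (isometric_kernel t^*) as (K & k & Ik & Htk & Hfac).
  destruct (bp_coprod C T Y K t k) as (U & U1 & U2 & _).
  assert (IU : isometry U).
  { assert (Hkt : k^* ∘ t = 0).
    { rewrite <- (star_invol _ _ _ t). exact (adjoint_eq0 Htk). }
    unfold isometry. rewrite gram_copair, U1, U2, It, Ik, Htk, Hkt. apply mx2_id. }
  assert (EU : epic U).
  { apply epic_of_zero_kernel_star. intros W w Hw.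
    assert (Ht0 : t^* ∘ w = 0).
    { rewrite <- U1, star_comp, <- comp_assoc, Hw, compr0. reflexivity. }
    assert (Hk0 : k^* ∘ w = 0).
    { rewrite <- U2, star_comp, <- comp_assoc, Hw, compr0. reflexivity. }
    rewrite <- (Hfac W w Ht0), Hk0, compr0. reflexivity. }
  exists K, k.
  rewrite <- (isometry_epic_coisometry IU EU), copair_outer, U1, U2. reflexivity.
Qed.

Lemma isometric_image_factorization A T (g : Hom A T) :
  exists M (m : Hom M T) (e : Hom A M), isometry m /\ m ∘ e = g /\ zero_kernel e^*.
Proof.
  destruct (isometric_kernel g^*) as (K & k & _ & Hgk & Hfac_k).
  destruct (isometric_kernel k^*) as (M & m & Im & Hkm & Hfac_m).
  exists M, m, (m^* ∘ g). split; [exact Im | split].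
  - apply Hfac_m. rewrite <- (star_invol _ _ _ g). exact (adjoint_eq0 Hgk).
  - intros W w Hw. rewrite star_comp, star_invol, <- comp_assoc in Hw.
    assert (Hmw : m ∘ w = 0).
    { rewrite <- (Hfac_k W (m ∘ w) Hw), (comp_assoc _ _ _ _ _ k^*), Hkm, comp0r, compr0.
      reflexivity. }
    rewrite <- (comp_id_l _ _ _ w), <- Im, <- comp_assoc, Hmw, compr0.
    reflexivity.
Qed.

Section Codilation.

Variables (X Y : Obj C) (f : Hom X Y).

Lemma contractive_codilation :
  contractive f -> exists T (t1 : Hom X T) (t2 : Hom Y T), is_codilation f t1 t2.
Proof.
  intros (c & Hc & Z & y & ->).
  exists (bp Y Z), <<f, y>>, (s1 Y Z). split; [| split].
  - unfold isometry. rewrite gram_pair. exact Hc.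
  - unfold isometry. rewrite star_s1. apply bp_r1s1.
  - rewrite star_s1. apply bp_pair_r1.
Qed.

Lemma codilation_contractive T (t1 : Hom X T) (t2 : Hom Y T) :
  is_codilation f t1 t2 -> contractive f.
Proof.
  intros (I1 & I2 & F).
  destruct (isometry_complement I2) as (K & k & Hsplit).
  exists ((k^* ∘ t1)^* ∘ (k^* ∘ t1)). split; [| exists K, (k^* ∘ t1); reflexivity].
  transitivity (t1^* ∘ (t2 ∘ t2^* + k ∘ k^*) ∘ t1).
  - rewrite compDr, compDl, <- F, !star_comp, !star_invol, <- !comp_assoc.
    reflexivity.
  - rewrite Hsplit, comp_id_r. exact I1.
Qed.

Lemma codilation_jointly_epic T (t1 : Hom X T) (t2 : Hom Y T) :
  is_codilation f t1 t2 ->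
  exists T' (t1' : Hom X T') (t2' : Hom Y T'), is_codilation f t1' t2' /\ jointly_epic t1' t2'.
Proof.
  intros (I1 & I2 & F).
  destruct (bp_coprod C T X Y t1 t2) as (g & G1 & G2 & _).
  destruct (isometric_image_factorization g) as (M & m & e & Im & Hme & He).
  exists M, (e ∘ s1 X Y), (e ∘ s2 X Y).
  split; [split; [| split] |].
  - unfold isometry. rewrite <- (isometry_cancel _ _ Im), !(comp_assoc _ _ _ _ _ m e),
      Hme, G1.
    exact I1.
  - unfold isometry. rewrite <- (isometry_cancel _ _ Im), !(comp_assoc _ _ _ _ _ m e),
      Hme, G2.
    exact I2.
  - rewrite <- (isometry_cancel _ _ Im), !(comp_assoc _ _ _ _ _ m e), Hme, G1, G2.
    exact F.
  - intros W u v E1 E2. apply (epic_of_zero_kernel_star He).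
    apply bp_copair_ext; rewrite <- !comp_assoc; assumption.
Qed.

Lemma codilation_positive T (t1 : Hom X T) (t2 : Hom Y T) :
  is_codilation f t1 t2 -> positive (mx2 1 f^* f 1).
Proof.
  intros (I1 & I2 & F).
  destruct (bp_coprod C T X Y t1 t2) as (U & U1 & U2 & _).
  exists T, U.
  rewrite gram_copair, U1, U2, I1, I2, <- F, star_comp, star_invol. reflexivity.
Qed.

Lemma positive_codilation :
  positive (mx2 1 f^* f 1) -> exists T (t1 : Hom X T) (t2 : Hom Y T), is_codilation f t1 t2.
Proof.
  intros (W & z & Hz).
  exists W, (z ∘ s1 X Y), (z ∘ s2 X Y).
  split; [| split]; unfold isometry; rewrite star_comp_comp, <- Hz, ?star_s1, ?star_s2.
  - apply mx2_11.
  - apply mx2_22.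
  - apply mx2_21.
Qed.

End Codilation.

End PreHilbert.

Theorem proposition7p14 (C : PreHilbertCat) (X Y : Obj C) (f : Hom X Y) :
  (contractive f <->
     exists (T : Obj C) (t1 : Hom X T) (t2 : Hom Y T),
       is_codilation f t1 t2 /\ jointly_epic t1 t2) /\
  (contractive f <->
     exists (T : Obj C) (t1 : Hom X T) (t2 : Hom Y T), is_codilation f t1 t2) /\
  (contractive f <->
     positive (mx2 (idm X) (star f) f (idm Y))).
Proof.
  split; [| split]; split.
  - intros (T & t1 & t2 & Ht)%contractive_codilation.
    exact (codilation_jointly_epic Ht).
  - intros (T & t1 & t2 & Ht & _). exact (codilation_contractive Ht).
  - apply contractive_codilation.
  - intros (T & t1 & t2 & Ht). exact (codilation_contractive Ht).
  - intros (T & t1 & t2 & Ht)%contractive_codilation. exact (codilation_positive Ht).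
  - intros (T & t1 & t2 & Ht)%positive_codilation. exact (codilation_contractive Ht).
Qed.
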